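(* Let $|\cdot|$ denote the Euclidean norm on $\mathbb{R}^n$ and $\langle\cdot,\cdot\rangle$ the Euclidean inner product. Let $l_0,l_1,\bar l_0,\bar l_1\in\mathbb{R}^n$ satisfy the two sticks condition $$|l_1-\bar l_0|\ge |l_1-l_0|\quad\text{and}\quad |\bar l_1-l_0|\ge |\bar l_1-\bar l_0|.$$ Then $$\langle l_1-\bar l_1,\ l_0-\bar l_0\rangle\ge 0.$$ Consequently, for every $0\le t\le 1$, writing $l_t=(1-t)l_0+tl_1$ and $\bar l_t=(1-t)\bar l_0+t\bar l_1$, $$(1-t)^2|l_0-\bar l_0|^2+t^2|l_1-\bar l_1|^2\le |l_t-\bar l_t|^2.$$
   Context: The points $l_0,l_1$ are the initial and terminal points of the directed segment (''stick'') $[l_0,l_1]$, and similarly for $[\bar l_0,\bar l_1]$; the sticks need not have equal length. *)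

From HB Require Import structures.
From mathcomp Require Import all_boot all_order all_algebra.
From mathcomp Require Import reals.
Set Implicit Arguments. Unset Strict Implicit. Unset Printing Implicit Defensive.
Import Order.TTheory GRing.Theory Num.Theory.
Local Open Scope ring_scope.

Definition dotv (R : realType) (n : nat) (u v : 'rV[R]_n) : R :=
  \sum_(i < n) u 0 i * v 0 i.

Definition enorm (R : realType) (n : nat) (u : 'rV[R]_n) : R :=
  Num.sqrt (dotv u u).

From HB Require Import structures.
From mathcomp Require Import all_boot all_order all_algebra.
From mathcomp Require Import reals.
From mathcomp Require Import ring lra.
Import Order.TTheory GRing.Theory Num.Theory.
Local Open Scope ring_scope.

(* Euler's four-point identity
     2 <l1 - lb1, l0 - lb0> = |l1 - lb0|^2 + |lb1 - l0|^2 - |l1 - l0|^2 - |lb1 - lb0|^2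
   turns the two sticks condition into the sign of the inner product.  Writing
   l_t - lb_t = (1 - t)(l0 - lb0) + t (l1 - lb1) and expanding the square, the
   second claim follows since the cross term 2t(1 - t)<l1 - lb1, l0 - lb0> is
   nonnegative. *)

Section InnerProduct.
Variables (R : realType) (n : nat).
Implicit Types (x y z : 'rV[R]_n) (a : R).

Lemma dotvC x y : dotv x y = dotv y x.
Proof. by apply: eq_bigr => i _; rewrite mulrC. Qed.

Lemma dotvDl x y z : dotv (x + y) z = dotv x z + dotv y z.
Proof. by rewrite /dotv -big_split; apply: eq_bigr => i _; rewrite mxE mulrDl. Qed.

Lemma dotvZl a x y : dotv (a *: x) y = a * dotv x y.
Proof. by rewrite /dotv mulr_sumr; apply: eq_bigr => i _; rewrite mxE mulrA. Qed.

Lemma dotvDr x y z : dotv x (y + z) = dotv x y + dotv x z.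
Proof. by rewrite dotvC dotvDl !(dotvC x). Qed.

Lemma dotvZr a x y : dotv x (a *: y) = a * dotv x y.
Proof. by rewrite dotvC dotvZl dotvC. Qed.

Lemma dotv_ge0 x : 0 <= dotv x x.
Proof. by apply: sumr_ge0 => i _; rewrite -expr2 sqr_ge0. Qed.

Lemma enorm_sqr x : enorm x ^+ 2 = dotv x x.
Proof. by rewrite sqr_sqrtr // dotv_ge0. Qed.

Lemma ler_enorm x y : (enorm x <= enorm y) = (dotv x x <= dotv y y).
Proof. by rewrite ler_sqrt // dotv_ge0. Qed.

Lemma dotv_four_point (a b c d : 'rV[R]_n) :
  2 * dotv (a - d) (b - c) =
  dotv (a - c) (a - c) + dotv (d - b) (d - b)
  - dotv (a - b) (a - b) - dotv (d - c) (d - c).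
Proof.
rewrite /dotv mulr_sumr -big_split -!sumrB /=.
by apply: eq_bigr => i _; rewrite !mxE; ring.
Qed.

Lemma dotv_scale_add_sqr a (b : R) x y :
  dotv (a *: x + b *: y) (a *: x + b *: y) =
  a ^+ 2 * dotv x x + b ^+ 2 * dotv y y + 2 * (a * b) * dotv y x.
Proof.
rewrite !(dotvDl, dotvDr, dotvZl, dotvZr) (dotvC x y); ring.
Qed.

End InnerProduct.

Lemma two_sticks_dotv_ge0 (R : realType) (n : nat) (l0 l1 lb0 lb1 : 'rV[R]_n) :
  enorm (l1 - l0) <= enorm (l1 - lb0) ->
  enorm (lb1 - lb0) <= enorm (lb1 - l0) ->
  0 <= dotv (l1 - lb1) (l0 - lb0).
Proof.
rewrite !ler_enorm => le1 le2.
have : 0 <= 2 * dotv (l1 - lb1) (l0 - lb0) by rewrite dotv_four_point; lra.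
by rewrite pmulr_rge0.
Qed.

Lemma convex_combination_subr (R : ringType) (V : lmodType R) (t : R)
    (x0 x1 y0 y1 : V) :
  (1 - t) *: x0 + t *: x1 - ((1 - t) *: y0 + t *: y1) =
  (1 - t) *: (x0 - y0) + t *: (x1 - y1).
Proof. by rewrite !scalerBr opprD addrACA. Qed.

Theorem proposition3p1 (R : realType) (n : nat) (l0 l1 lb0 lb1 : 'rV[R]_n) :
  enorm (l1 - lb0) >= enorm (l1 - l0) ->
  enorm (lb1 - l0) >= enorm (lb1 - lb0) ->
  0 <= dotv (l1 - lb1) (l0 - lb0) /\
  (forall t : R, 0 <= t <= 1 ->
     (1 - t) ^+ 2 * enorm (l0 - lb0) ^+ 2 + t ^+ 2 * enorm (l1 - lb1) ^+ 2
     <= enorm (((1 - t) *: l0 + t *: l1) - ((1 - t) *: lb0 + t *: lb1)) ^+ 2).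
Proof.
move=> le1 le2.
have dot_ge0 : 0 <= dotv (l1 - lb1) (l0 - lb0) by exact: two_sticks_dotv_ge0.
split=> // t /andP[t_ge0 t_le1].
rewrite convex_combination_subr !enorm_sqr dotv_scale_add_sqr lerDl.
by rewrite mulr_ge0 // mulr_ge0 // mulr_ge0 // subr_ge0.
Qed.
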